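(* Let $T\colon[0,1)\to[0,1)$ be an interval exchange transformation and $\lambda$ Lebesgue measure. Then $C_\psi(T)\le\tfrac12$, where \[C_\psi(T)=\sup\big(\{0\}\cup\{\alpha>0:\ \liminf_{n\to\infty}n^\alpha|T^nx-T^ny|=0\text{ for }\lambda\times\lambda\text{-a.e. }(x,y)\}\big).\]
   Context: An $r$-interval exchange transformation is given by a permutation $\pi$ of $\{1,\dots,r\}$ and lengths $\ell_i>0$ with $\sum\ell_i=1$: with $s_0=0$, $s_k=\sum_{i\le k}\ell_i$, $I_k=[s_{k-1},s_k)$, one sets $T(x)=x-\sum_{i<k}\ell_i+\sum_{\pi(i')<\pi(k)}\ell_{i'}$ for $x\in I_k$. *)

From HB Require Import structures.
From mathcomp Require Import all_boot all_order all_algebra all_fingroup.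
From mathcomp Require Import all_classical all_reals all_analysis.
Set Implicit Arguments. Unset Strict Implicit. Unset Printing Implicit Defensive.
Import Order.TTheory GRing.Theory Num.Theory.
Local Open Scope ring_scope.

(* Interval exchange transformation data: r intervals (indexed 0..r-1 instead of
   1..r), a permutation pi of 'I_r, positive lengths l summing to 1.
   I_k = [ \sum_{i<k} l_i , \sum_{i<=k} l_i ) and on I_k,
   T x = x - \sum_{i<k} l_i + \sum_{pi i' < pi k} l_{i'}.
   T is a function R -> R; only its values on [0,1) matter. *)
Definition is_iet_data (R : realType) (r : nat) (pi : {perm 'I_r}) (l : 'I_r -> R)
  (T : R -> R) : Prop :=
  (forall i, 0 < l i) /\ (\sum_(i < r) l i = 1) /\
  forall (k : 'I_r) (x : R),
    \sum_(i < r | (i < k)%N) l i <= x < \sum_(i < r | (i <= k)%N) l i ->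
    T x = x - \sum_(i < r | (i < k)%N) l i + \sum_(i' < r | (pi i' < pi k)%N) l i'.

Definition is_iet (R : realType) (T : R -> R) : Prop :=
  exists (r : nat) (pi : {perm 'I_r}) (l : 'I_r -> R), is_iet_data pi l T.

Definition C_psi (R : realType) (T : R -> R) : \bar R :=
  ereal_sup ([set 0%E] `|`
    [set (a%:E) | a in [set a : R | 0 < a /\
      {ae ((@lebesgue_measure R) \x (@lebesgue_measure R))%E,
         forall z : R * R, (0 <= z.1 < 1) -> (0 <= z.2 < 1) ->
           limn_einf (fun n : nat =>
             ((n%:R `^ a) * `|iter n T z.1 - iter n T z.2|)%:E) = 0%E}]]%classic).

From HB Require Import structures.
From mathcomp Require Import all_boot all_order all_algebra all_fingroup.
From mathcomp Require Import all_classical all_reals all_analysis.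
From mathcomp Require Import ring lra.
Set Implicit Arguments. Unset Strict Implicit. Unset Printing Implicit Defensive.
Import Order.TTheory GRing.Theory Num.Theory.
Local Open Scope ring_scope.
Local Open Scope classical_set_scope.

(* Suppose x != y and n^a |T^n x - T^n y| < 1.  Let k < n be the last time at
   which T^k x and T^k y lie in different intervals I_i, I_j; afterwards T acts
   on both points by the same translation, so |T^(k+1) x - T^(k+1) y| < n^-a.
   The images T(I_i), T(I_j) are disjoint, hence both points are n^-a-close to
   the left end of some T(I_e), i.e. (x, y) lies in a product of two preimages
   of an interval of length 2 n^-a.  Since T preserves Lebesgue measure, for
   B^M <= n < B^(M+1) these pairs have measure at most
   4 r B^(M+1) B^(-2aM) <= 4 r B 2^-M, provided B^(2a) >= 2B, which can be
   arranged exactly when a > 1/2.  Summing over M >= m0 gives at most 1/2 and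
   the diagonal is covered by a set of measure 1/4, so the liminf cannot vanish
   almost everywhere on the unit square. *)

Lemma ler_sum_subpred (R : numDomainType) (I : finType) (P Q : pred I) (F : I -> R) :
  (forall i, 0 <= F i) -> (forall i, P i -> Q i) ->
  \sum_(i | P i) F i <= \sum_(i | Q i) F i.
Proof.
move=> F_ge0 PQ; rewrite [X in _ <= X](bigID P) /=.
have -> : \sum_(i | Q i && P i) F i = \sum_(i | P i) F i.
  by apply: eq_bigl => i; case: (boolP (P i)) => Pi; rewrite ?andbT ?andbF ?PQ.
by rewrite lerDl sumr_ge0.
Qed.

Lemma sum_leq_ltn (R : nmodType) n (g : 'I_n -> nat) (F : 'I_n -> R) k :
  injective g ->
  \sum_(i < n | (g i <= g k)%N) F i = \sum_(i < n | (g i < g k)%N) F i + F k.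
Proof.
move=> g_inj; rewrite (bigD1 k) //= addrC; congr (_ + _); apply: eq_bigl => i.
by rewrite ltn_neqAle andbC (inj_eq g_inj).
Qed.

Definition psum (R : nmodType) n (l : 'I_n -> R) (m : nat) :=
  \sum_(i < n | (i < m)%N) l i.

Lemma psum_cover (R : realDomainType) n (l : 'I_n -> R) (x : R) m : (m <= n)%N ->
  0 <= x < psum l m -> exists k : 'I_n, psum l k <= x < psum l k + l k.
Proof.
elim: m => [|m IHm] lt_mn /andP[x_ge0 x_lt].
  by move: x_lt; rewrite /psum big_pred0 // => /(le_lt_trans x_ge0); rewrite ltxx.
have [x_ltm|x_gem] := ltP x (psum l m); first by apply: IHm; [exact: ltnW | rewrite x_ge0].
exists (Ordinal lt_mn); rewrite x_gem /=.
by rewrite /psum -(sum_leq_ltn _ (Ordinal lt_mn) val_inj).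
Qed.

Lemma bigsetU_ordP (T : Type) n (F : 'I_n -> set T) x :
  (\big[setU/set0]_(i < n) F i) x <-> exists i, F i x.
Proof.
rewrite (eq_bigl (fun i => i \in (@predT 'I_n))) // -bigcup_pred.
by split => [[i _ Fix]|[i Fix]]; exists i.
Qed.

Lemma measure_bigsetU_ord_le d (T : measurableType d) (R : realType)
    (mu : {measure set T -> \bar R}) n (F : 'I_n -> set T) (A : set T) :
  measurable A -> (forall i, measurable (F i)) ->
  A `<=` \big[setU/set0]_(i < n) F i -> (mu A <= \sum_(i < n) mu (F i))%E.
Proof.
move=> mA mF AF.
pose G (k : nat) := \big[setU/set0]_(i < n | val i == k) F i.
have GE (i : 'I_n) : G i = F i.
  by rewrite /G (big_pred1 i) // => j /=; rewrite (inj_eq val_inj).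
have := @content_subadditive _ _ _ mu A G n.
rewrite (eq_bigr (fun i : 'I_n => mu (F i))); last by move=> i _; rewrite GE.
apply => //; first by move=> k _; apply: bigsetU_measurable.
move=> x /AF; rewrite (eq_bigr (fun i : 'I_n => G i)); last by move=> i _; rewrite GE.
by rewrite -!bigcup_mkord.
Qed.

Section LebesgueTranslation.
Variables (R : realType) (c : R).

Let shift_measurable_fun : measurable_fun [set: R] (fun x : R => x + c).
Proof. by apply: measurable_realfun.measurable_funD => //; exact: measurable_cst. Qed.

Lemma measurable_shift (A : set R) : measurable A ->
  measurable ((fun x => x + c) @^-1` A).
Proof. by move=> mA; rewrite -[X in measurable X]setTI; exact: shift_measurable_fun. Qed.

Lemma lebesgue_measure_shift (A : set R) : measurable A ->
  lebesgue_measure ((fun x => x + c) @^-1` A) = lebesgue_measure A.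
Proof.
move=> mA.
unshelve epose proof (@lebesgue_measure_unique R
  (@pushforward _ _ (measurableTypeR R) (measurableTypeR R) R lebesgue_measure
    (fun x : R => x + c) : measure (measurableTypeR R) R)) as uniq.
  exact: shift_measurable_fun.
rewrite (uniq _ _ mA) // => _ [[a b] _ <-] /=; rewrite /pushforward.
have -> : (fun x : R => x + c) @^-1` `]a, b] = `]a - c, b - c].
  by apply/seteqP; split => x /=; rewrite !in_itv /= ltrBlDr lerBrDr.
rewrite !lebesgue_measure_itv /= !lte_fin ltrD2r.
by case: ifP => // _; congr (_%:E); rewrite opprB addrA subrK.
Qed.

End LebesgueTranslation.

Lemma lebesgue_measure_ball_le (R : realType) (c e : R) : 0 <= e ->
  (lebesgue_measure (`](c - e)%R, (c + e)%R[ : set R) <= (2 * e)%:E)%E.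
Proof. by move=> e_ge0; rewrite lebesgue_measure_itv /=; case: ifP; rewrite lee_fin; lra. Qed.

Section IntervalExchange.
Variables (R : realType) (r : nat) (pi : {perm 'I_r}) (l : 'I_r -> R) (T : R -> R).
Hypothesis iet : is_iet_data pi l T.

(* With 0-based indices, [psum l k] is the left end of I_k and [psum_perm k]
   the left end of T(I_k). *)
Definition psum_perm (k : 'I_r) := \sum_(i < r | (pi i < pi k)%N) l i.

Definition in_piece (k : 'I_r) (x : R) := psum l k <= x < psum l k + l k.

Let l_ge0 i : 0 <= l i. Proof. by case: iet => /(_ i) /ltW. Qed.

Let pi_inj : injective (fun i => nat_of_ord (pi i)).
Proof. exact: inj_comp val_inj (@perm_inj _ pi). Qed.

Lemma iet_translate k x : in_piece k x -> T x = x + (psum_perm k - psum l k).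
Proof.
case: iet => _ [_ T_def] x_k.
rewrite (T_def k x) /psum_perm /psum; first lra.
by rewrite (sum_leq_ltn _ _ val_inj).
Qed.

Lemma iet_cover x : 0 <= x < 1 -> exists k, in_piece k x.
Proof.
move=> /andP[x_ge0 x_lt1]; apply: (psum_cover (m := r)) => //.
rewrite x_ge0 (_ : psum l r = 1) //.
by case: iet => _ [<- _]; apply: eq_bigl => i; rewrite ltn_ord.
Qed.

Lemma psum_perm_ge0 k : 0 <= psum_perm k.
Proof. exact: sumr_ge0. Qed.

Lemma psum_perm_le1 k : psum_perm k + l k <= 1.
Proof.
case: iet => _ [<- _]; rewrite /psum_perm -(sum_leq_ltn _ _ pi_inj).
exact: ler_sum_subpred.
Qed.

Lemma psum_perm_lt i j : (pi i < pi j)%N -> psum_perm i + l i <= psum_perm j.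
Proof.
move=> lt_ij; rewrite /psum_perm -(sum_leq_ltn _ _ pi_inj).
by apply: ler_sum_subpred => // i' /leq_ltn_trans; apply.
Qed.

Lemma iet_image k x : in_piece k x -> psum_perm k <= T x < psum_perm k + l k.
Proof. by move=> x_k; rewrite (iet_translate x_k); move: x_k => /andP[]; lra. Qed.

Lemma iet_unit x : 0 <= x < 1 -> 0 <= T x < 1.
Proof.
move=> /iet_cover[k /iet_image]; have := psum_perm_ge0 k; have := psum_perm_le1 k.
by lra.
Qed.

Lemma iter_iet_unit n x : 0 <= x < 1 -> 0 <= iter n T x < 1.
Proof. by move=> x01; elim: n => //= n; exact: iet_unit. Qed.

Lemma iter_iet_diff x y n :
  iter n T x - iter n T y = x - y \/
  exists2 k, (k < n)%N &
    (~ exists j, in_piece j (iter k T x) /\ in_piece j (iter k T y)) /\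
    iter k.+1 T x - iter k.+1 T y = iter n T x - iter n T y.
Proof.
elim: n => [|n IHn]; first by left.
have [[j [xj yj]]|no_j] :=
  pselect (exists j, in_piece j (iter n T x) /\ in_piece j (iter n T y)); last first.
  by right; exists n.
have -> : iter n.+1 T x - iter n.+1 T y = iter n T x - iter n T y.
  by rewrite /= (iet_translate xj) (iet_translate yj); lra.
case: IHn => [->|[k lt_kn [no_k <-]]]; first by left.
by right; exists k => //; exact: ltnW.
Qed.

Lemma psum_perm_sep i j : i != j ->
  psum_perm i + l i <= psum_perm j \/ psum_perm j + l j <= psum_perm i.
Proof.
move=> neq_ij; have neq_pi : pi i != pi j by rewrite (inj_eq (@perm_inj _ pi)).
case: (ltngtP (pi i) (pi j)) => [lt_ij|lt_ji|eq_ij].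
- by left; exact: psum_perm_lt.
- by right; exact: psum_perm_lt.
- by move: neq_pi; rewrite (val_inj eq_ij) eqxx.
Qed.

Lemma iet_close_images i j u v eps : in_piece i u -> in_piece j v -> i != j ->
  `|T u - T v| < eps -> exists e,
    (psum_perm e - eps < T u < psum_perm e + eps) /\
    (psum_perm e - eps < T v < psum_perm e + eps).
Proof.
move=> /iet_image u_i /iet_image v_j /psum_perm_sep + /ltr_normlP[].
by case=> sep; [exists j | exists i]; lra.
Qed.

Definition piece_image (k : 'I_r) : set R := `[psum_perm k, psum_perm k + l k[.

(* T is only constrained on [0,1), so instead of [T @^-1` B] we use this
   measurable union of translates, which contains [0,1) `&` T @^-1` B. *)
Definition iet_pre (B : set R) : set R :=
  \big[setU/set0]_(k < r)
    ((fun x => x + (psum_perm k - psum l k)) @^-1` (piece_image k `&` B)).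

Lemma measurable_iet_pre B : measurable B -> measurable (iet_pre B).
Proof.
move=> mB; apply: bigsetU_measurable => k _; apply: measurable_shift.
by apply: measurableI => //; exact: measurable_itv.
Qed.

Lemma iet_pre_sub B x : 0 <= x < 1 -> B (T x) -> iet_pre B x.
Proof.
move=> /iet_cover[k x_k] BTx; apply/bigsetU_ordP; exists k => /=.
by rewrite -(iet_translate x_k); split => //; rewrite /piece_image /= in_itv /= iet_image.
Qed.

Lemma iet_pre_le B : measurable B ->
  (lebesgue_measure (iet_pre B) <= lebesgue_measure B)%E.
Proof.
move=> mB.
have mJB k : measurable (piece_image k `&` B).
  by apply: measurableI => //; exact: measurable_itv.
have disj : trivIset setT (fun k => piece_image k `&` B).
  apply/trivIsetP => i j _ _ /psum_perm_sep sep; apply/seteqP; split => // x.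
  by rewrite /piece_image /= !in_itv /= => -[[/andP[? ?] _] [/andP[? ?] _]]; lra.
apply: (le_trans (measure_bigsetU_ord_le (F := fun k =>
  (fun x => x + (psum_perm k - psum l k)) @^-1` (piece_image k `&` B)) (@lebesgue_measure R)
  (measurable_iet_pre mB) (fun k => measurable_shift _ (mJB k)) (fun x Bx => Bx))).
rewrite (eq_bigr (fun k => lebesgue_measure (piece_image k `&` B))); last first.
  by move=> k _; apply: lebesgue_measure_shift.
rewrite -measure_bigsetU_ord //; apply: le_measure; rewrite ?inE.
- by apply: bigsetU_measurable => k _; exact: mJB.
- exact: mB.
- by move=> x /bigsetU_ordP[k []].
Qed.

Lemma measurable_iter_iet_pre n B : measurable B -> measurable (iter n iet_pre B).
Proof. by move=> mB; elim: n => //= n; exact: measurable_iet_pre. Qed.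

Lemma iter_iet_pre_le n B : measurable B ->
  (lebesgue_measure (iter n iet_pre B) <= lebesgue_measure B)%E.
Proof.
move=> mB; elim: n => //= n IHn.
exact: le_trans (iet_pre_le (measurable_iter_iet_pre n mB)) IHn.
Qed.

Lemma iter_iet_pre_sub n B x : 0 <= x < 1 -> B (iter n T x) -> iter n iet_pre B x.
Proof.
elim: n x => // n IHn x x01; rewrite iterSr => Bx /=.
by apply: iet_pre_sub => //; apply: IHn => //; exact: iet_unit.
Qed.

Definition near_break (eps : R) (k : nat) (e : 'I_r) : set R :=
  iter k.+1 iet_pre `](psum_perm e - eps), (psum_perm e + eps)[.

Definition break_pairs (eps : R) (K : nat) : set (R * R) :=
  \big[setU/set0]_(k < K) \big[setU/set0]_(e < r)
    (near_break eps k e `*` near_break eps k e).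

Lemma measurable_near_break eps k e : measurable (near_break eps k e).
Proof. by apply: measurable_iter_iet_pre; exact: measurable_itv. Qed.

Lemma measurable_break_pairs eps K : measurable (break_pairs eps K).
Proof.
apply: bigsetU_measurable => k _; apply: bigsetU_measurable => e _.
by apply: measurableX; exact: measurable_near_break.
Qed.

Lemma break_pairs_mem eps K n x y : 0 <= x < 1 -> 0 <= y < 1 -> (n <= K)%N ->
  `|iter n T x - iter n T y| < eps -> iter n T x - iter n T y != x - y ->
  break_pairs eps K (x, y).
Proof.
move=> x01 y01 le_nK close moved.
case: (iter_iet_diff x y n) => [same|[k lt_kn [split_k diff_k]]].
  by rewrite same eqxx in moved.
have [i x_i] := iet_cover (iter_iet_unit k x01).
have [j y_j] := iet_cover (iter_iet_unit k y01).
have neq_ij : i != j by apply/eqP => eq_ij; apply: split_k; exists i; rewrite {2}eq_ij.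
have close_k : `|T (iter k T x) - T (iter k T y)| < eps by move: close; rewrite -diff_k.
have [e [xe ye]] := iet_close_images x_i y_j neq_ij close_k.
apply/bigsetU_ordP; exists (Ordinal (leq_trans lt_kn le_nK)).
by apply/bigsetU_ordP; exists e; split; apply: iter_iet_pre_sub; rewrite //= in_itv.
Qed.

Local Notation lambda2 := ((@lebesgue_measure R) \x (@lebesgue_measure R))%E.

Lemma break_pairs_measure_le eps K : 0 <= eps ->
  (lambda2 (break_pairs eps K) <= ((K * r)%:R * (2 * eps) ^+ 2)%:E)%E.
Proof.
move=> eps_ge0.
have mX k e : measurable (near_break eps k e `*` near_break eps k e).
  by apply: measurableX; exact: measurable_near_break.
have mU k : measurable
    (\big[setU/set0]_(e < r) (near_break eps k e `*` near_break eps k e)).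
  by apply: bigsetU_measurable => e _.
have square_le k e :
    (lambda2 (near_break eps k e `*` near_break eps k e) <= ((2 * eps) ^+ 2)%:E)%E.
  have le_2eps : (lebesgue_measure (near_break eps k e) <= (2 * eps)%:E)%E.
    exact: le_trans (iter_iet_pre_le _ (measurable_itv _))
                    (lebesgue_measure_ball_le _ eps_ge0).
  rewrite product_measure1E; [|exact: measurable_near_break..].
  rewrite expr2 EFinM.
  by apply: lee_pmul => //; exact: measure_ge0.
apply: le_trans (measure_bigsetU_ord_le lambda2 (measurable_break_pairs eps K) mU
  (fun z h => h)) _.
apply: (@le_trans _ _ (\sum_(k < K) \sum_(e < r) ((2 * eps) ^+ 2)%:E)%E).
  apply: lee_sum => k _.
  apply: le_trans (measure_bigsetU_ord_le lambda2 (mU k) (mX k) (fun z h => h)) _.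
  by apply: lee_sum => e _; exact: square_le.
by rewrite !sumEFin !sumr_const !card_ord -mulrnA mulnC (mulr_natl ((2 * eps) ^+ 2)).
Qed.

End IntervalExchange.

Lemma limn_einf0_frequently (R : realType) (u : (\bar R)^nat) :
  limn_einf u = 0%E -> forall N, exists2 n, (N <= n)%N & (u n < 1)%E.
Proof.
move=> u_lim0 N.
have : (einfs u N <= 0)%E.
  rewrite -u_lim0 limn_einf_lim (cvg_lim _ (@cvg_einfs_sup _ u)) //.
  by apply: le_ereal_sup_tmp; exists (einfs u N) => //; exists N.
move=> /le_lt_trans /(_ lte01) /ereal_inf_lt[_ [n /= le_Nn <-] lt_un].
by exists n.
Qed.

Lemma powR_sqr_ge (R : realType) (x a : R) : 1 <= x -> 1 / 2 <= a ->
  x <= (x `^ a) ^+ 2.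
Proof.
move=> x_ge1 a_ge; have x_ge0 : 0 <= x := le_trans ler01 x_ge1.
rewrite -powR_mulrn ?powR_ge0 // -powRrM -{1}(powRr1 x_ge0).
by apply: ler_powR => //; lra.
Qed.

Lemma powR_inv_lt (R : realType) (x a d : R) : 1 <= x -> 1 / 2 <= a -> 0 < d ->
  d ^- 2 < x -> (x `^ a)^-1 < d.
Proof.
move=> x_ge1 a_ge d_gt0 x_gt.
have xa_gt0 : 0 < x `^ a by rewrite powR_gt0 // (lt_le_trans ltr01).
rewrite -[d]invrK ltf_pV2 ?posrE ?invr_gt0 //.
rewrite -(@ltr_pXn2r _ 2) ?nnegrE ?invr_ge0 ?ltW // exprVn.
exact: lt_le_trans x_gt (powR_sqr_ge x_ge1 a_ge).
Qed.

Lemma powR_natX (R : realType) (x b : R) m : 0 <= x -> (x ^+ m) `^ b = (x `^ b) ^+ m.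
Proof. by move=> x_ge0; rewrite -[x ^+ m]powR_mulrn // powRAC powR_mulrn ?powR_ge0. Qed.

Lemma exists_pow_base (R : realType) (a : R) : 1 / 2 < a ->
  exists2 B : nat, (1 < B)%N & (2 * B)%:R <= B%:R `^ (2 * a) :> R.
Proof.
move=> a_gt; set c := 2 * a - 1; have c_gt0 : 0 < c by rewrite /c; lra.
have [L L_ge] : exists L : nat, 1 <= L%:R * c.
  exists (Num.Def.archi_bound c^-1).
  have cV_ge0 : 0 <= c^-1 by rewrite invr_ge0 ltW.
  have /ltW := archi_boundP cV_ge0.
  by rewrite -[c^-1]div1r ler_pdivrMr.
have L_gt0 : (0 < L)%N by case: L L_ge => //; rewrite mul0r ler10.
exists (2 ^ L)%N; first by rewrite -{1}(expn0 2) ltn_exp2l.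
have B_ge1 : 1 <= (2 ^ L)%:R :> R by rewrite ler1n expn_gt0.
have -> : 2 * a = 1 + c by rewrite /c; lra.
rewrite powRD; last by apply/implyP => _; rewrite gt_eqF // (lt_le_trans ltr01 B_ge1).
rewrite powRr1 ?(le_trans ler01 B_ge1) // natrM mulrC ler_pM2l ?(lt_le_trans ltr01 B_ge1) //.
rewrite natrX -powR_mulrn // -powRrM -{1}(powRr1 (ler0n _ 2)).
by apply: ler_powR; rewrite ?ler1n //; lra.
Qed.

Lemma pow_base_geometric (R : realType) (a : R) (B m : nat) :
  (2 * B)%:R <= B%:R `^ (2 * a) :> R -> (2 ^ m * B ^ m)%:R <= (B ^ m)%:R `^ (2 * a) :> R.
Proof.
move=> B_pow; rewrite -expnMn !natrX powR_natX //.
by apply: lerXn2r; rewrite ?nnegrE ?powR_ge0.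
Qed.

Section ScaledBreakPairs.
Variables (R : realType) (r : nat) (pi : {perm 'I_r}) (l : 'I_r -> R) (T : R -> R).
Hypothesis iet : is_iet_data pi l T.
Variables (a : R) (B : nat).
Hypotheses (a_gt : 1 / 2 < a) (B_gt1 : (1 < B)%N).
Hypothesis B_pow : (2 * B)%:R <= B%:R `^ (2 * a) :> R.

Local Notation lambda2 := ((@lebesgue_measure R) \x (@lebesgue_measure R))%E.

Definition scale_eps (m : nat) : R := ((B ^ m)%:R `^ a)^-1.

Definition scale_pairs (m : nat) : set (R * R) :=
  break_pairs pi l (scale_eps m) (B ^ m.+1).

Let Bm_gt0 m : (0 < B ^ m)%N. Proof. by rewrite expn_gt0 ltnW. Qed.

Lemma scale_pairs_measure_le m :
  (lambda2 (scale_pairs m) <= ((4 * r * B)%:R / (2 ^ m)%:R)%:E)%E.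
Proof.
have Ba_gt0 : 0 < (B ^ m)%:R `^ a by rewrite powR_gt0 // ltr0n.
have eps_ge0 : 0 <= scale_eps m by rewrite invr_ge0 ltW.
apply: le_trans (break_pairs_measure_le iet _ eps_ge0) _; rewrite lee_fin.
have -> : (2 * scale_eps m) ^+ 2 = 4 / (B ^ m)%:R `^ (2 * a).
  rewrite exprMn exprVn -[_ `^ a ^+ 2]powR_mulrn ?powR_ge0 // -powRrM [a * _]mulrC.
  by rewrite expr2 -natrM.
apply: (@le_trans _ _ ((B ^ m.+1 * r)%:R * (4 / (2 ^ m * B ^ m)%:R))).
  rewrite ler_wpM2l // ler_wpM2l // lef_pV2 ?posrE ?powR_gt0 ?ltr0n ?muln_gt0
    ?expn_gt0 ?(ltnW B_gt1) //.
  exact: pow_base_geometric B_pow.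
rewrite le_eqVlt; apply/orP; left; apply/eqP.
rewrite !natrM !natrX exprS; field.
by rewrite !expf_neq0 // pnatr_eq0 -lt0n ltnW.
Qed.

Lemma scale_pairs_tail_le m0 : (16 * r * B <= 2 ^ m0)%N ->
  (lambda2 (\bigcup_i scale_pairs (m0 + i)) <= (1 / 2)%:E)%E.
Proof.
move=> m0_ge.
have m_sp i : measurable (scale_pairs (m0 + i)) by exact: measurable_break_pairs.
apply: le_trans (@measure_sigma_subadditive _ _ _ lambda2 _
  (fun i => scale_pairs (m0 + i)) m_sp (bigcup_measurable (fun i _ => m_sp i))
  (fun z hz => hz)) _.
apply: le_trans (epsilon_trick0 xpredT _); last by lra.
apply: lee_nneseries => [i _ _|i _]; first exact: measure_ge0.
apply: le_trans (scale_pairs_measure_le (m0 + i)) _; rewrite lee_fin.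
have -> : 1 / 2 / (2 ^ i.+1)%:R = (2 ^ m0)%:R / 4 / (2 ^ (m0 + i))%:R :> R.
  by rewrite expnS expnD !natrM; field; rewrite !pnatr_eq0 -!lt0n !expn_gt0.
rewrite ler_pM2r ?invr_gt0 ?ltr0n ?expn_gt0 // ler_pdivlMr // -natrM ler_nat.
by rewrite mulnC !mulnA.
Qed.

Lemma liminf0_scale_pairs m0 x y : 0 <= x < 1 -> 0 <= y < 1 -> x != y ->
  limn_einf (fun n => ((n%:R `^ a) * `|iter n T x - iter n T y|)%:E) = 0%E ->
  (\bigcup_i scale_pairs (m0 + i)) (x, y).
Proof.
move=> x01 y01 neq_xy lim0.
have d_gt0 : 0 < `|x - y| by rewrite normr_gt0 subr_eq0.
have [n] := limn_einf0_frequently lim0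
  (maxn (B ^ m0) (Num.Def.archi_bound (`|x - y| ^- 2))).
rewrite geq_max lte_fin => /andP[Bm0_le_n bound_le_n] small.
have n_gt0 : (0 < n)%N := leq_trans (Bm_gt0 m0) Bm0_le_n.
have na_gt0 : 0 < n%:R `^ a by rewrite powR_gt0 // ltr0n.
have dist_lt : `|iter n T x - iter n T y| < (n%:R `^ a)^-1.
  by rewrite -(ltr_pM2l na_gt0) mulfV ?gt_eqF.
have d_big : (n%:R `^ a)^-1 < `|x - y|.
  apply: powR_inv_lt => //; rewrite ?ler1n //; first exact: ltW.
  apply: lt_le_trans (archi_boundP _) _; first by rewrite invr_ge0 exprn_ge0.
  by rewrite ler_nat.
have /andP[BM_le_n n_lt_BM] := trunc_log_bounds B_gt1 n_gt0.
have m0_le_M : (m0 <= trunc_log B n)%N := trunc_log_max B_gt1 Bm0_le_n.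
exists (trunc_log B n - m0)%N => //; rewrite subnKC //.
apply: (break_pairs_mem iet x01 y01 (ltnW n_lt_BM)).
  apply: lt_le_trans dist_lt _; rewrite lef_pV2 ?posrE ?powR_gt0 ?ltr0n //.
  apply: ge0_ler_powR; rewrite ?nnegrE ?ler_nat //.
  by apply: le_trans (ltW a_gt); rewrite divr_ge0.
by apply: contraTneq (lt_trans dist_lt d_big) => ->; rewrite ltxx.
Qed.

End ScaledBreakPairs.

Section DiagonalCover.
Variables (R : realType) (n : nat).
Hypothesis n_gt0 : (0 < n)%N.

Local Notation lambda2 := ((@lebesgue_measure R) \x (@lebesgue_measure R))%E.

Definition grid_cell (k : nat) : set R := `[k%:R / n%:R, k.+1%:R / n%:R[.

Definition diagonal_cover : set (R * R) :=
  \big[setU/set0]_(k < n) (grid_cell k `*` grid_cell k).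

Let n_R_gt0 : 0 < n%:R :> R. Proof. by rewrite ltr0n. Qed.

Lemma measurable_diagonal_cover : measurable diagonal_cover.
Proof. by apply: bigsetU_measurable => k _; apply: measurableX; exact: measurable_itv. Qed.

Lemma diagonal_cover_measure_le : (lambda2 diagonal_cover <= (n%:R^-1)%:E)%E.
Proof.
have cell_sq k : lambda2 (grid_cell k `*` grid_cell k) = ((n%:R^-1) ^+ 2)%:E.
  rewrite product_measure1E; [|exact: measurable_itv..].
  rewrite /= /grid_cell lebesgue_measure_itv /= lte_fin ltr_pM2r ?invr_gt0 // ltr_nat ltnSn.
  by rewrite -EFinD -EFinM -mulrBl -natrB // subSnn expr2 mul1r.
apply: le_trans (measure_bigsetU_ord_le lambda2 measurable_diagonal_cover
  (fun k => measurableX (measurable_itv _) (measurable_itv _)) (fun z h => h)) _.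
rewrite (eq_bigr (fun=> ((n%:R^-1) ^+ 2)%:E)) => [|k _]; last exact: cell_sq.
rewrite sumEFin sumr_const card_ord lee_fin.
by rewrite -(mulr_natl (n%:R^-1 ^+ 2)) expr2 mulrA mulfV ?gt_eqF // mul1r.
Qed.

Lemma diagonal_cover_diag x : 0 <= x < 1 -> diagonal_cover (x, x).
Proof.
move=> /andP[x_ge0 x_lt1]; have xn_ge0 : 0 <= x * n%:R by rewrite mulr_ge0.
have k_lt : (Num.truncn (x * n%:R) < n)%N.
  by rewrite truncn_lt_nat // -ltr_pdivlMr // divff ?gt_eqF.
have /andP[k_le k_gt] := truncn_itv xn_ge0.
have x_cell : grid_cell (Num.truncn (x * n%:R)) x.
  by rewrite /grid_cell /= in_itv /= ler_pdivrMr // ltr_pdivlMr // k_le.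
by apply/bigsetU_ordP; exists (Ordinal k_lt).
Qed.

End DiagonalCover.

Definition orbits_liminf0 (R : realType) (T : R -> R) (a : R) (z : R * R) : Prop :=
  (0 <= z.1 < 1) -> (0 <= z.2 < 1) ->
  limn_einf (fun n : nat => ((n%:R `^ a) * `|iter n T z.1 - iter n T z.2|)%:E) = 0%E.

Section LiminfExponent.
Variable R : realType.

Local Notation lambda2 := ((@lebesgue_measure R) \x (@lebesgue_measure R))%E.

Lemma lambda2_unit_square : lambda2 (`[0, 1[ `*` `[0, 1[) = 1%E.
Proof.
rewrite product_measure1E; [|exact: measurable_itv..].
by rewrite /= lebesgue_measure_itv /= lte_fin ltr01 /= oppr0 adde0 mule1.
Qed.

Lemma iet_orbits_liminf0_exponent_le r (pi : {perm 'I_r}) (l : 'I_r -> R) T a :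
  is_iet_data pi l T -> {ae lambda2, forall z, orbits_liminf0 T a z} -> a <= 1 / 2.
Proof.
move=> iet [N [mN N0 notP_N]]; rewrite leNgt; apply/negP => a_gt.
have [B B_gt1 B_pow] := exists_pow_base a_gt.
pose m0 := (16 * r * B)%N.
pose bad := \bigcup_i scale_pairs pi l a B (m0 + i).
have m_bad : measurable bad.
  by apply: bigcup_measurable => i _; exact: measurable_break_pairs.
have bad_le : (lambda2 bad <= (1 / 2)%:E)%E.
  apply: (scale_pairs_tail_le iet B_gt1 B_pow).
  exact: ltnW (ltn_expl _ (ltnSn 1)).
pose square : set (R * R) := `[0, 1[ `*` `[0, 1[.
have square_sub : square `<=` N `|` (@diagonal_cover R 4 `|` bad).
  move=> [x y] [/= x01 y01]; rewrite !in_itv /= in x01 y01.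
  have [Nxy|notNxy] := pselect (N (x, y)); [by left | right].
  have /(_ x01 y01) lim0 : orbits_liminf0 T a (x, y).
    by apply: contrapT => notP; exact/notNxy/notP_N.
  have [<-|neq_xy] := eqVneq x y; first by left; exact: diagonal_cover_diag.
  by right; exact (liminf0_scale_pairs iet a_gt B_gt1 m0 x01 y01 neq_xy lim0).
have m_diag := @measurable_diagonal_cover R 4.
have m_rest : measurable (@diagonal_cover R 4 `|` bad) by apply: measurableU.
have m_all : measurable (N `|` (@diagonal_cover R 4 `|` bad)) by apply: measurableU.
have le_union := @le_measure _ _ _ lambda2 _ _
  (mem_set (measurableX (measurable_itv _) (measurable_itv _)))
  (mem_set m_all) square_sub.
have one_le : (1 <= lambda2 square)%E by rewrite lambda2_unit_square.
have N_le0 : (lambda2 N <= 0)%E by rewrite N0.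
have := le_trans one_le (le_trans le_union (le_trans (measureU2 lambda2 mN m_rest)
  (leeD N_le0 (le_trans (measureU2 lambda2 m_diag m_bad)
  (leeD (@diagonal_cover_measure_le R 4 isT) bad_le))))).
by rewrite add0e -EFinD lee_fin; lra.
Qed.

End LiminfExponent.

Theorem proposition7p1 (R : realType) (T : R -> R) :
  is_iet T -> (C_psi T <= (1 / 2 : R)%:E)%E.
Proof.
move=> [r [pi [l iet]]]; apply: ge_ereal_sup => _ [-> | [a [_ ae_liminf0] <-]].
  by rewrite lee_fin divr_ge0.
by rewrite lee_fin; exact (iet_orbits_liminf0_exponent_le iet ae_liminf0).
Qed.
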